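(* Let $X$ and $Y$ be arbitrary (completely regular) spaces and $F\colon\mathcal{K}(X)\to\mathcal{K}(Y)$ satisfy: (1) if $K,L\in\mathcal{K}(X)$ and $K\subset L$, then $F(K)\subset F(L)$; (2) for each $L\in\mathcal{K}(Y)$ there is $K\in\mathcal{K}(X)$ with $L\subset F(K)$; (3) if $U\subset X$ and $V\subset Y$ are non-empty open sets such that for each compact $L\subset V$ there is a compact $K\subset U$ with $L\subset F(K)$, then for any open cover $\mathcal{W}$ of $U$ and any $y\in V$ there exist a finite $\mathcal{E}\subset\mathcal{W}$ and a neighborhood $V_y$ of $y$ such that for each compact $L\subset V_y$ there is a compact $K\subset\bigcup\mathcal{E}$ with $L\subset F(K)$. Then $F$ is monotone set tri-quotient.
   Context: $\mathcal{K}(X)$ is the set of compact subsets of $X$, $\mathcal{T}(X)$ the topology of $X$. $F$ is monotone if $K\subset L$ implies $F(K)\subset F(L)$; it is set tri-quotient if there is $s\colon\mathcal{T}(X)\to\mathcal{T}(Y)$ with: (str1) $s(U)\subset\bigcup\{F(K):K\in\mathcal{K}(X),K\subset U\}$; (str2) $s(X)=Y$; (str3) $U\subset V\Rightarrow s(U)\subset s(V)$; (str4) if $y\in s(U)$ and $\mathcal{W}$ is a cover of $\bigcup\{K\in F^{-1}(y):K\subset U\}$ by open subsets of $X$, then $y\in s(\bigcup\mathcal{E})$ for some finite $\mathcal{E}\subset\mathcal{W}$, where $F^{-1}(y)=\{K\in\mathcal{K}(X):y\in F(K)\}$. *)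

From HB Require Import structures.
From mathcomp Require Import all_boot all_order all_algebra.
From mathcomp Require Import all_classical all_reals all_analysis.
Set Implicit Arguments. Unset Strict Implicit. Unset Printing Implicit Defensive.
Local Open Scope classical_set_scope.

(* A map F : K(X) -> K(Y) is represented by F : set X -> set Y together with
   the requirement that F sends compact sets to compact sets; only its values
   on compact sets matter. *)
Definition compact_valued {X Y : topologicalType} (F : set X -> set Y) :=
  forall K : set X, compact K -> compact (F K).

Definition monotoneK {X Y : topologicalType} (F : set X -> set Y) :=
  forall K L : set X, compact K -> compact L -> K `<=` L -> F K `<=` F L.

Definition preimK_in {X Y : topologicalType} (F : set X -> set Y) (y : Y)
  (U : set X) : set X :=
  \bigcup_(K in [set K : set X | compact K /\ F K y /\ K `<=` U]) K.

(* s : T(X) -> T(Y) is represented by s : set X -> set Y which maps open sets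
   to open sets; conditions are required only on open arguments. *)
Definition set_tri_quotient {X Y : topologicalType} (F : set X -> set Y) :=
  exists s : set X -> set Y,
    (forall U, open U -> open (s U)) /\
    (forall U, open U ->
       s U `<=` \bigcup_(K in [set K : set X | compact K /\ K `<=` U]) F K) /\
    s setT = setT /\
    (forall U V, open U -> open V -> U `<=` V -> s U `<=` s V) /\
    (forall (U : set X) (y : Y) (W : set (set X)), open U -> s U y ->
       (forall A, W A -> open A) ->
       preimK_in F y U `<=` \bigcup_(A in W) A ->
       exists E : set (set X), [/\ finite_set E, E `<=` W &
                                   s (\bigcup_(A in E) A) y]).

Definition monotone_set_tri_quotient {X Y : topologicalType}
  (F : set X -> set Y) := monotoneK F /\ set_tri_quotient F.

From HB Require Import structures.
From mathcomp Require Import all_boot all_order all_algebra.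
From mathcomp Require Import all_classical all_reals all_analysis.
Set Implicit Arguments. Unset Strict Implicit. Unset Printing Implicit Defensive.
Local Open Scope classical_set_scope.

(* Take s(U) to be the union of all open V whose compact subsets are all
   covered by images F(K) of compact K c U.  For (str4), if y lies in s(U)
   then y is in some F(K0) with K0 c U compact, so by monotonicity every x
   in U lies in the compact K0 u {x}, whose image contains y; hence W covers
   U and hypothesis (3) yields the finite E together with an open
   neighbourhood of y lying in s(\bigcup E). *)

Section LargestCoveredOpen.
Variables (X Y : topologicalType) (F : set X -> set Y).

Definition covers_compacts (U : set X) (V : set Y) :=
  forall L : set Y, compact L -> L `<=` V ->
    exists K : set X, [/\ compact K, K `<=` U & L `<=` F K].

Lemma covers_compactsS (U U' : set X) (V V' : set Y) :
  U `<=` U' -> V' `<=` V -> covers_compacts U V -> covers_compacts U' V'.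
Proof.
move=> UU' V'V covUV L cL LV'.
have [K [cK KU LK]] := covUV L cL (subset_trans LV' V'V).
by exists K; split => //; apply: subset_trans UU'.
Qed.

Definition largest_covered_open (U : set X) : set Y :=
  \bigcup_(V in [set V : set Y | open V /\ covers_compacts U V]) V.

Lemma open_largest_covered_open (U : set X) : open (largest_covered_open U).
Proof. by apply: bigcup_open => V []. Qed.

Lemma largest_covered_openS (U U' : set X) :
  U `<=` U' -> largest_covered_open U `<=` largest_covered_open U'.
Proof.
move=> UU' y [V [oV covUV] Vy]; exists V => //.
by split => //; apply: covers_compactsS covUV.
Qed.

Lemma largest_covered_open_image (U : set X) (y : Y) :
  largest_covered_open U y ->
  exists K : set X, [/\ compact K, K `<=` U & F K y].
Proof.
move=> [V [_ covUV] Vy].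
have yV : [set y] `<=` V by move=> z ->.
have [K [cK KU yK]] := covUV [set y] (@compact_set1 _ y) yV.
by exists K; split => //; apply: yK.
Qed.

Lemma largest_covered_open_sub_images (U : set X) :
  largest_covered_open U `<=`
  \bigcup_(K in [set K : set X | compact K /\ K `<=` U]) F K.
Proof.
move=> y /largest_covered_open_image [K [cK KU yK]].
by exists K.
Qed.

Lemma largest_covered_openT :
  (forall L : set Y, compact L -> exists K : set X, compact K /\ L `<=` F K) ->
  largest_covered_open setT = setT.
Proof.
move=> hcov; apply/seteqP; split => // y _; exists setT => //.
split; first exact: openT.
by move=> L cL _; have [K [cK LK]] := hcov L cL; exists K.
Qed.

Lemma preimK_in_full (U : set X) (y : Y) (K0 : set X) :
  monotoneK F -> compact K0 -> K0 `<=` U -> F K0 y -> U `<=` preimK_in F y U.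
Proof.
move=> monoF cK0 K0U yK0 x Ux.
have cK0x : compact (K0 `|` [set x]) := compactU cK0 (@compact_set1 _ x).
exists (K0 `|` [set x]); last by right.
split => //; split; last by move=> z [/K0U|->].
by apply: (monoF K0) => // z K0z; left.
Qed.

End LargestCoveredOpen.

Theorem lemma4p1 (X Y : topologicalType)
  (crX : completely_regular_space X) (crY : completely_regular_space Y)
  (F : set X -> set Y) (hF : compact_valued F)
  (h1 : forall K L : set X, compact K -> compact L -> K `<=` L -> F K `<=` F L)
  (h2 : forall L : set Y, compact L -> exists K : set X, compact K /\ L `<=` F K)
  (h3 : forall (U : set X) (V : set Y),
      open U -> U !=set0 -> open V -> V !=set0 ->
      (forall L : set Y, compact L -> L `<=` V ->
         exists K : set X, [/\ compact K, K `<=` U & L `<=` F K]) ->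
      forall (W : set (set X)) (y : Y),
        (forall A, W A -> open A) -> U `<=` \bigcup_(A in W) A -> V y ->
        exists (E : set (set X)) (Vy : set Y),
          [/\ finite_set E, E `<=` W, nbhs y Vy &
              forall L : set Y, compact L -> L `<=` Vy ->
                exists K : set X,
                  [/\ compact K, K `<=` \bigcup_(A in E) A & L `<=` F K]]) :
  monotone_set_tri_quotient F.
Proof.
split => //; exists (largest_covered_open F).
split; first by move=> U _; apply: open_largest_covered_open.
split; first by move=> U _; apply: largest_covered_open_sub_images.
split; first exact: largest_covered_openT.
split; first by move=> U V _ _; apply: largest_covered_openS.
move=> U y W oU sUy oW preimW.
have [U0|/set0P[x Ux]] := eqVneq U set0.
  by exists set0; split => //; rewrite bigcup_set0 -U0.
have [K0 [cK0 K0U yK0]] := largest_covered_open_image sUy.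
have UW := subset_trans (preimK_in_full h1 cK0 K0U yK0) preimW.
have [V [oV covUV] Vy] := sUy.
have [E [Vy' [fE EW nVy covEVy']]] :=
  h3 U V oU (ex_intro _ x Ux) oV (ex_intro _ y Vy) covUV W y oW UW Vy.
exists E; split => //; exists (interior Vy') => //.
split; first exact: open_interior.
by apply: covers_compactsS covEVy' => //; apply: interior_subset.
Qed.
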